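(* Let $\mathcal{M}=(K,G,A,(\gamma')_{\gamma\in\Gamma},(\delta')_{\delta\in\Delta})$ be a model of $T$ and let $K'=\mathbb{Q}\big(\{\operatorname{Re}(\gamma'\delta'):\gamma\in\Gamma,\delta\in\Delta\}\big)^{\mathrm{rc}}\subseteq K$. Then $\lambda((K')^{>0})=\Delta'$.
   Context: $T$ is the theory of structures $(K,G,A,(\gamma')_{\gamma\in\Gamma},(\delta')_{\delta\in\Delta})$ (for a fixed finite rank $\Gamma\le\mathbb{S}^1$ and $\Delta=\varepsilon^{\mathbb{Z}}$, real $\varepsilon>1$) with $K$ real closed, $A\le K^{>0}$ having $\varepsilon'$ as least element $>1$, $G$ a dense subgroup of $\mathbb{S}^1(K)$, for all $k\in K^{>0}$ some $a\in A$ with $a\le k<a\varepsilon'$, $\gamma\mapsto\gamma'$ and $\delta\mapsto\delta'$ homomorphisms into $G$ and $A$, the orientation axioms (for all $Q\in\mathbb{Z}[x_1,\dots,x_n]$, $Q(\operatorname{Re}(\gamma_1'\delta_1'),\dots)>0$ in $K$ iff $Q(\operatorname{Re}(\gamma_1\delta_1),\dots)>0$ in $\mathbb{R}$), the Mann axioms, and torsion of $G$ equal to the image of torsion of $\Gamma$. $F^{\mathrm{rc}}$ is the real closure inside $K$. $\lambda:K^{>0}\to A$ sends $k$ to the unique $a\in A$ with $a\le k<a\varepsilon'$; $\Delta'=\{\delta':\delta\in\Delta\}$. *)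

From Stdlib Require Import Reals ZArith.
From Stdlib Require QArith.QArith_base Reals.Qreals.
From HB Require Import structures.
From mathcomp Require Import all_boot all_order all_algebra.
Set Implicit Arguments. Unset Strict Implicit. Unset Printing Implicit Defensive.
Import Order.TTheory GRing.Theory Num.Theory.

Definition cmulR (z w : R * R) : R * R :=
  (Rminus (Rmult z.1 w.1) (Rmult z.2 w.2), Rplus (Rmult z.1 w.2) (Rmult z.2 w.1)).
Definition coneR : R * R := (R1, R0).
(* inverse of a point of the unit circle = complex conjugate *)
Definition cinvR (z : R * R) : R * R := (z.1, Ropp z.2).
Definition onS1R (z : R * R) : Prop := Rplus (Rmult z.1 z.1) (Rmult z.2 z.2) = R1.
Fixpoint cpowR (z : R * R) (n : nat) : R * R :=
  match n with O => coneR | S m => cmulR (cpowR z m) z end.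
Definition czpowR (z : R * R) (k : Z) : R * R :=
  match k with
  | Z0 => coneR
  | Zpos p => cpowR z (Pos.to_nat p)
  | Zneg p => cinvR (cpowR z (Pos.to_nat p)) end.
Fixpoint gprodR (r : nat) (gen : nat -> R * R) (k : nat -> Z) : R * R :=
  match r with O => coneR | S m => cmulR (gprodR m gen k) (czpowR (gen m) (k m)) end.

Definition subgroup_S1R (Gam : R * R -> Prop) : Prop :=
  (forall z, Gam z -> onS1R z) /\ Gam coneR /\
  (forall z w, Gam z -> Gam w -> Gam (cmulR z w)) /\
  (forall z, Gam z -> Gam (cinvR z)).

Definition finite_rank (Gam : R * R -> Prop) : Prop :=
  exists (r : nat) (gen : nat -> R * R),
    (forall i, (i < r)%N -> Gam (gen i)) /\
    forall z, Gam z -> exists (n : nat) (k : nat -> Z),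
      (0 < n)%N /\ cpowR z n = gprodR r gen k.

Definition inDelta (eps x : R) : Prop := exists z : Z, x = powerRZ eps z.

Inductive zpoly : Type :=
| ZPOne : zpoly
| ZPVar : nat -> zpoly
| ZPAdd : zpoly -> zpoly -> zpoly
| ZPMul : zpoly -> zpoly -> zpoly
| ZPNeg : zpoly -> zpoly.

Fixpoint evalR (e : nat -> R) (p : zpoly) : R :=
  match p with
  | ZPOne => R1
  | ZPVar i => e i
  | ZPAdd p q => Rplus (evalR e p) (evalR e q)
  | ZPMul p q => Rmult (evalR e p) (evalR e q)
  | ZPNeg p => Ropp (evalR e p) end.

Local Open Scope ring_scope.

Fixpoint evalK (K : rcfType) (e : nat -> K) (p : zpoly) : K :=
  match p with
  | ZPOne => 1
  | ZPVar i => e i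
  | ZPAdd p q => evalK e p + evalK e q
  | ZPMul p q => evalK e p * evalK e q
  | ZPNeg p => - evalK e p end.

Section KSide.
Variable K : rcfType.

Definition cmulK (z w : K * K) : K * K :=
  (z.1 * w.1 - z.2 * w.2, z.1 * w.2 + z.2 * w.1).
Definition coneK : K * K := (1, 0).
Definition cinvK (z : K * K) : K * K := (z.1, - z.2).
Definition onS1K (z : K * K) : Prop := z.1 ^+ 2 + z.2 ^+ 2 = 1.
Fixpoint cpowK (z : K * K) (n : nat) : K * K :=
  match n with O => coneK | S m => cmulK (cpowK z m) z end.

Definition subgroup_S1K (G : K * K -> Prop) : Prop :=
  (forall z, G z -> onS1K z) /\ G coneK /\
  (forall z w, G z -> G w -> G (cmulK z w)) /\
  (forall z, G z -> G (cinvK z)).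

Definition dense_in_S1K (G : K * K -> Prop) : Prop :=
  forall z (e : K), onS1K z -> 0 < e ->
    exists g, G g /\ `|g.1 - z.1| < e /\ `|g.2 - z.2| < e.

Definition subgroup_posK (A : K -> Prop) : Prop :=
  (forall a, A a -> 0 < a) /\ A 1 /\
  (forall a b, A a -> A b -> A (a * b)) /\ (forall a, A a -> A a^-1).

Definition Z2K (z : Z) : K :=
  match z with
  | Z0 => 0
  | Zpos p => (Pos.to_nat p)%:R
  | Zneg p => - (Pos.to_nat p)%:R end.
Definition Q2K (q : QArith_base.Q) : K :=
  Z2K (QArith_base.Qnum q) / (Pos.to_nat (QArith_base.Qden q))%:R.

Definition linsumK (n : nat) (a : nat -> QArith_base.Q) (I : nat -> bool)
    (g : nat -> K * K) : K * K :=
  (\sum_(i < n | I i) Q2K (a i) * (g i).1, \sum_(i < n | I i) Q2K (a i) * (g i).2).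

Definition nondegK (n : nat) (a : nat -> QArith_base.Q) (g : nat -> K * K) : Prop :=
  forall I : nat -> bool, (exists i, (i < n)%N /\ I i) -> linsumK n a I g <> (0, 0).

Inductive gen_field (S : K -> Prop) : K -> Prop :=
| gf_base x : S x -> gen_field S x
| gf_zero : gen_field S 0
| gf_one : gen_field S 1
| gf_add x y : gen_field S x -> gen_field S y -> gen_field S (x + y)
| gf_opp x : gen_field S x -> gen_field S (- x)
| gf_mul x y : gen_field S x -> gen_field S y -> gen_field S (x * y)
| gf_inv x : gen_field S x -> gen_field S x^-1.

(* (Q(S))^rc inside K: elements of K algebraic over the field Q(S)
   (the relative algebraic closure, which is the real closure of Q(S) in K) *)
Definition rc_in (S : K -> Prop) (x : K) : Prop :=
  exists p : {poly K}, p != 0 /\ (forall i, gen_field S p`_i) /\ root p x.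

Definition is_lambda (A : K -> Prop) (eps' k a : K) : Prop :=
  A a /\ a <= k /\ k < a * eps'.

End KSide.

Fixpoint linsumR (n : nat) (a : nat -> QArith_base.Q) (I : nat -> bool)
    (g : nat -> R * R) : R * R :=
  match n with
  | O => (R0, R0)
  | S m => let s := linsumR m a I g in
      if I m then (Rplus s.1 (Rmult (Q2R (a m)) (g m).1),
                   Rplus s.2 (Rmult (Q2R (a m)) (g m).2))
      else s end.

Definition nondegR (n : nat) (a : nat -> QArith_base.Q) (g : nat -> R * R) : Prop :=
  forall I : nat -> bool, (exists i, (i < n)%N /\ I i) -> linsumR n a I g <> (R0, R0).

Definition model_T (eps : R) (Gam : R * R -> Prop)
    (K : rcfType) (G : K * K -> Prop) (A : K -> Prop)
    (gp : R * R -> K * K) (dp : R -> K) : Prop :=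
  let eps' := dp eps in
  subgroup_S1K G /\ dense_in_S1K G /\
  subgroup_posK A /\ A eps' /\ 1 < eps' /\ (forall a, A a -> 1 < a -> eps' <= a) /\
  (forall k : K, 0 < k -> exists a, A a /\ a <= k /\ k < a * eps') /\
  (forall g, Gam g -> G (gp g)) /\
  (forall g h, Gam g -> Gam h -> gp (cmulR g h) = cmulK (gp g) (gp h)) /\
  (forall d, inDelta eps d -> A (dp d)) /\
  (forall d e, inDelta eps d -> inDelta eps e -> dp (Rmult d e) = dp d * dp e) /\
  (* orientation axioms; Re(gamma' delta') = delta' * Re gamma' *)
  (forall (Q : zpoly) (g : nat -> R * R) (d : nat -> R),
     (forall i, Gam (g i)) -> (forall i, inDelta eps (d i)) ->
     (0 < evalK (fun i => dp (d i) * (gp (g i)).1) Q <->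
      Rlt R0 (evalR (fun i => Rmult (d i) (g i).1) Q))) /\
  (forall (n : nat) (a : nat -> QArith_base.Q) (g : nat -> K * K),
     (forall i, (i < n)%N -> G (g i)) ->
     linsumK n a (fun _ => true) g = coneK K -> nondegK n a g ->
     exists gam : nat -> R * R,
       (forall i, (i < n)%N -> Gam (gam i)) /\
       linsumR n a (fun _ => true) gam = coneR /\ nondegR n a gam /\
       (forall i, (i < n)%N -> g i = gp (gam i))) /\
  (forall x : K * K,
     (G x /\ exists n, (0 < n)%N /\ cpowK x n = coneK K) <->
     (exists gam, Gam gam /\ (exists n, (0 < n)%N /\ cpowR gam n = coneR) /\
                  x = gp gam)).

(* Every element of Q(S), S = {Re(g'd')}, is a quotient of integer polynomials
   evaluated at finitely many values Re(g'd').  For such a quotient p/q the real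
   counterparts satisfy p^2 < E^2 q^2 and q^2 < E^2 p^2 for a large power E of eps,
   and the orientation axioms carry these polynomial inequalities over to K; hence
   every x in Q(S) satisfies |x| < B and, if x <> 0, 1 < |x| B for some B in Delta'.
   Cauchy's bound on the roots of a polynomial with such coefficients then traps
   every positive k algebraic over Q(S) between two elements of Delta', so walking
   up the powers of eps' finds d in Delta with d' <= k < d' eps', i.e. lambda(k) = d'.
   Conversely d' lies in K' and is its own lambda. *)

From Stdlib Require Import Reals ZArith.
From Stdlib Require Lra Psatz.
From mathcomp Require Import all_boot all_order all_algebra.
From mathcomp Require Import ring lra.
Set Implicit Arguments. Unset Strict Implicit. Unset Printing Implicit Defensive.
Import Order.TTheory GRing.Theory Num.Theory.
Local Open Scope ring_scope.

Section RealField.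
Variable K : realFieldType.

Lemma norm_divr_lt (p q M : K) :
  q != 0 -> 0 <= M -> p * p < M * M * (q * q) -> `|p / q| < M.
Proof.
move=> q0 M0 pq; rewrite normrM normrV ?unitfE // ltr_pdivrMr ?normr_gt0 //.
have sq x : `|x| * `|x| = x * x :> K by rewrite -!expr2 real_normK ?num_real.
have : `|p| * `|p| < (M * `|q|) * (M * `|q|) by rewrite sq mulrACA sq.
have : 0 <= M * `|q| by rewrite mulr_ge0.
by have := normr_ge0 p; move: (M * `|q|) => Mq; nra.
Qed.

Lemma norm_divr_gt_inv (p q M : K) : p != 0 -> q != 0 -> 0 <= M ->
  q * q < M * M * (p * p) -> 1 < `|p / q| * M.
Proof.
move=> p0 q0 M0 /(norm_divr_lt p0 M0).
have pq0 : 0 < `|p / q| by rewrite normr_gt0 mulf_neq0 ?invr_eq0.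
by rewrite -invf_div normfV -[X in X < M]mulr1 ltr_pdivrMl.
Qed.

Definition bounded_by (x B : K) := `|x| < B /\ (x != 0 -> 1 < `|x| * B).

Lemma cauchy_root_bound n (c : nat -> K) (k B : K) : 0 < k -> 0 < B ->
  (forall i, (i <= n)%N -> bounded_by (c i) B) ->
  (exists2 i, (i <= n)%N & c i != 0) ->
  \sum_(i < n.+1) c i * k ^+ i = 0 -> k < 1 + n%:R * B ^+ 2.
Proof.
move=> k0 B0; elim: n => [|m IH] cB [i im ci0].
  move: im ci0; rewrite leqn0 => /eqP-> /negPf c0.
  by rewrite big_ord1 expr0 mulr1 => /eqP; rewrite c0.
rewrite big_ord_recr /=.
have B2 : 0 <= B ^+ 2 by rewrite exprn_ge0 // ltW.
have [cm0 | cm0] := eqVneq (c m.+1) 0.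
  have im' : (i <= m)%N.
    by rewrite leq_eqVlt in im; case/orP: im => [/eqP ei|//]; rewrite ei cm0 eqxx in ci0.
  rewrite cm0 mul0r addr0 => /(IH (fun j jm => cB j (leqW jm)) (ex_intro2 _ _ i im' ci0)).
  by move/lt_le_trans; apply; rewrite lerD2l ler_wpM2r // ler_nat.
have [k1 | k1] := ltP k 1; first by move=> _; apply: (lt_le_trans k1); rewrite lerDl mulr_ge0.
move=> /eqP; rewrite addrC addr_eq0 => /eqP top.
have [_ /(_ cm0) cmB] := cB m.+1 (leqnn _).
have km0 : 0 < k ^+ m by rewrite exprn_gt0.
have top_le : `|c m.+1| * k ^+ m.+1 <= m.+1%:R * B * k ^+ m.
  rewrite -(ger0_norm (ltW (exprn_gt0 m.+1 k0))) -normrM top normrN.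
  apply: (le_trans (ler_norm_sum _ _ _)).
  have -> : m.+1%:R * B * k ^+ m = \sum_(j < m.+1) B * k ^+ m.
    by rewrite sumr_const card_ord -mulrA mulr_natl.
  have k_ge0 := ltW k0.
  apply: ler_sum => j _; rewrite normrM [`|k ^+ _|]ger0_norm ?exprn_ge0 //.
  apply: ler_pM; rewrite ?exprn_ge0 //; first exact/ltW/(cB j (leqW (ltn_ord j))).1.
  by apply: ler_weXn2l => //; rewrite -ltnS.
have : `|c m.+1| * k <= m.+1%:R * B by rewrite -(ler_pM2r km0) -mulrA -exprS.
rewrite mulrSr => ckB; have := normr_ge0 (c m.+1); nra.
Qed.

Lemma cauchy_root_bound_inv n (c : nat -> K) (k B : K) : 0 < k -> 0 < B ->
  (forall i, (i <= n)%N -> bounded_by (c i) B) ->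
  (exists2 i, (i <= n)%N & c i != 0) ->
  \sum_(i < n.+1) c i * k ^+ i = 0 -> k^-1 < 1 + n%:R * B ^+ 2.
Proof.
move=> k0 B0 cB [i0 i0n ci0] csum.
apply: (@cauchy_root_bound n (fun i => c (n - i)%N)) => //.
- by rewrite invr_gt0.
- by move=> i _; apply: cB; apply: leq_subr.
- by exists (n - i0)%N; rewrite ?leq_subr ?subKn.
have k_neq0 : k != 0 by rewrite gt_eqF.
have rev_term (i : 'I_n.+1) :
    c (n - (n.+1 - i.+1))%N * k^-1 ^+ (n.+1 - i.+1) = c i * k ^+ i * k^-1 ^+ n.
  have i_le_n : (i <= n)%N by rewrite -ltnS.
  have -> : k^-1 ^+ n = k^-1 ^+ (n - i) * k^-1 ^+ i by rewrite -exprD subnK.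
  rewrite subSS (subKn i_le_n) -mulrA; congr (_ * _).
  by rewrite mulrCA [k^-1 ^+ i]exprVn mulfV ?mulr1 // expf_neq0.
rewrite (reindex_inj rev_ord_inj) (eq_bigr _ (fun i _ => rev_term i)).
by rewrite -mulr_suml csum mul0r.
Qed.

Lemma poly_root_bounds (p : {poly K}) (k B : K) : p != 0 -> 0 < k -> 0 < B ->
  (forall i, bounded_by p`_i B) -> root p k ->
  k < 1 + (size p).-1%:R * B ^+ 2 /\ k^-1 < 1 + (size p).-1%:R * B ^+ 2.
Proof.
move=> p0 k0 B0 pB /rootP; rewrite horner_coef; set n := (size p).-1.
have -> : size p = n.+1 by rewrite prednK // size_poly_gt0.
have lead0 : exists2 i, (i <= n)%N & p`_i != 0.
  by exists n; rewrite // -lead_coefE lead_coef_eq0.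
by split; [apply: cauchy_root_bound | apply: cauchy_root_bound_inv].
Qed.

End RealField.

Lemma is_lambda_unique (K : rcfType) (A : K -> Prop) (e k a b : K) :
  subgroup_posK A -> (forall x, A x -> 1 < x -> e <= x) ->
  is_lambda A e k a -> is_lambda A e k b -> a = b.
Proof.
move=> [Apos [_ [AM AV]]] e_min.
wlog ab : a b / a <= b => [wlog_ab la lb|].
  case: (leP a b) => [ab | /ltW ba]; first exact: wlog_ab ab la lb.
  exact/esym/(wlog_ab _ _ ba lb la).
move=> [Aa [ak ka]] [Ab [bk kb]]; have a0 := Apos _ Aa.
rewrite le_eqVlt in ab; case/orP: ab => [/eqP //|ab].
have : e <= b / a by apply: e_min; [apply: AM => //; apply: AV | rewrite ltr_pdivlMr ?mul1r].
rewrite ler_pdivlMr // mulrC => ae_b; lra.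
Qed.

Lemma exists_geometric_step (K : realDomainType) (u : nat -> K) (e k : K) m :
  (forall j, u j.+1 = u j * e) -> u 0%N <= k -> k < u m ->
  exists j, u j <= k /\ k < u j * e.
Proof.
move=> uS u0k; elim: m => [|m IH km]; first by move/(le_lt_trans u0k); rewrite ltxx.
by case: (ltP k (u m)) => [/IH //|umk]; exists m; rewrite -uS.
Qed.

Lemma eventually_forall_le (P : nat -> nat -> Prop) n :
  (forall i, (i <= n)%N -> exists N, forall M, (N <= M)%N -> P i M) ->
  exists N, forall M, (N <= M)%N -> forall i, (i <= n)%N -> P i M.
Proof.
elim: n => [|n IH] evP.
  have [N HN] := evP 0%N (leqnn 0); exists N => M NM i; rewrite leqn0 => /eqP->.
  exact: HN.
have [N1 HN1] := IH (fun i i_le => evP i (leqW i_le)).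
have [N2 HN2] := evP n.+1 (leqnn _).
exists (maxn N1 N2) => M; rewrite geq_max => /andP[N1M N2M] i.
by rewrite leq_eqVlt => /orP[/eqP-> | ]; [apply: HN2 | rewrite ltnS; apply: HN1].
Qed.

Fixpoint zren (f : nat -> nat) (p : zpoly) : zpoly :=
  match p with
  | ZPOne => ZPOne
  | ZPVar i => ZPVar (f i)
  | ZPAdd p q => ZPAdd (zren f p) (zren f q)
  | ZPMul p q => ZPMul (zren f p) (zren f q)
  | ZPNeg p => ZPNeg (zren f p)
  end.

Lemma evalK_ren (K : rcfType) (e : nat -> K) f p :
  evalK e (zren f p) = evalK (fun i => e (f i)) p.
Proof. by elim: p => //= [p IHp q IHq|p IHp q IHq|p IHp]; rewrite ?IHp ?IHq. Qed.

Lemma evalR_ren (e : nat -> R) f p :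
  evalR e (zren f p) = evalR (fun i => e (f i)) p.
Proof. by elim: p => //= [p IHp q IHq|p IHp q IHq|p IHp]; rewrite ?IHp ?IHq. Qed.

Lemma eq_evalK (K : rcfType) (e e' : nat -> K) p : e =1 e' -> evalK e p = evalK e' p.
Proof. by move=> ee'; elim: p => //= [p IHp q IHq|p IHp q IHq|p IHp]; rewrite ?IHp ?IHq. Qed.

Section ZFrac.
Variables (K : rcfType) (e : nat -> K).

Definition zfrac (x : K) :=
  exists P Q, evalK e Q != 0 /\ x = evalK e P / evalK e Q.

Lemma zfrac_var i : zfrac (e i).
Proof. by exists (ZPVar i), ZPOne; rewrite /= oner_eq0 divr1. Qed.

Lemma zfrac0 : zfrac 0.
Proof. by exists (ZPAdd ZPOne (ZPNeg ZPOne)), ZPOne; rewrite /= oner_eq0 subrr mul0r. Qed.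

Lemma zfrac1 : zfrac 1.
Proof. by exists ZPOne, ZPOne; rewrite /= oner_eq0 divr1. Qed.

Lemma zfracN x : zfrac x -> zfrac (- x).
Proof. by move=> [P [Q [Q0 ->]]]; exists (ZPNeg P), Q; rewrite /= mulNr. Qed.

Lemma zfracD x y : zfrac x -> zfrac y -> zfrac (x + y).
Proof.
move=> [P1 [Q1 [Q10 ->]]] [P2 [Q2 [Q20 ->]]].
exists (ZPAdd (ZPMul P1 Q2) (ZPMul P2 Q1)), (ZPMul Q1 Q2).
by rewrite /= mulf_neq0 //; split=> //; field; apply/andP.
Qed.

Lemma zfracM x y : zfrac x -> zfrac y -> zfrac (x * y).
Proof.
move=> [P1 [Q1 [Q10 ->]]] [P2 [Q2 [Q20 ->]]].
exists (ZPMul P1 P2), (ZPMul Q1 Q2).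
by rewrite /= mulf_neq0 //; split=> //; field; apply/andP.
Qed.

Lemma zfracV x : zfrac x -> zfrac x^-1.
Proof.
move=> [P [Q [Q0 ->]]]; have [P0 | P0] := eqVneq (evalK e P) 0.
  by rewrite P0 mul0r invr0; apply: zfrac0.
by exists Q, P; rewrite invf_div.
Qed.

End ZFrac.

Lemma zfrac_ren (K : rcfType) (e e' : nat -> K) (f : nat -> nat) x :
  (forall i, e' i = e (f i)) -> zfrac e' x -> zfrac e x.
Proof.
move=> e'e [P [Q [Q0 ->]]]; exists (zren f P), (zren f Q).
by rewrite !evalK_ren -!(eq_evalK _ e'e).
Qed.

Lemma gen_field_nat (K : rcfType) (S : K -> Prop) n : gen_field S n%:R.
Proof. by elim: n => [|n IH]; [exact: gf_zero | rewrite mulrS; apply: gf_add => //; apply: gf_one]. Qed.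

Lemma gen_field_rc_in (K : rcfType) (S : K -> Prop) x : gen_field S x -> rc_in S x.
Proof.
move=> Sx; exists ('X - x%:P); split; first by rewrite polyXsubC_eq0.
split; last by rewrite root_XsubC.
move=> i; rewrite coefB coefX coefC; apply: gf_add; first exact: gen_field_nat.
by apply: gf_opp; case: (i == 0)%N; [exact: Sx | exact: gf_zero].
Qed.

Lemma eventually_sqr_lt (eps p q : R) : Rlt R1 eps -> q <> R0 ->
  exists N, forall M, (N <= M)%N ->
    Rlt (Rmult p p) (Rmult (Rmult (pow eps M) (pow eps M)) (Rmult q q)).
Proof.
move=> eps1 q0; have q2 : Rlt R0 (Rmult q q) by Psatz.nra.
have [N HN] := Pow_x_infinity eps ltac:(rewrite Rabs_pos_eq; Lra.lra)
  (Rplus (Rdiv (Rplus (Rmult p p) R1) (Rmult q q)) R1).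
exists N => M /ssrnat.leP/HN; rewrite Rabs_pos_eq; last by apply: pow_le; Lra.lra.
have : Rmult (Rdiv (Rplus (Rmult p p) R1) (Rmult q q)) (Rmult q q) = Rplus (Rmult p p) R1.
  by rewrite /Rdiv Rmult_assoc Rinv_l ?Rmult_1_r //; Lra.lra.
set c := Rdiv _ _; set E := pow eps M => cq Ec.
have Eq : Rlt (Rmult p p) (Rmult E (Rmult q q)) by Psatz.nra.
have E1 : Rle R1 E by Psatz.nra.
rewrite Rmult_assoc; Psatz.nra.
Qed.

Definition interleave T (f g : nat -> T) (i : nat) : T :=
  if odd i then g i./2 else f i./2.

Lemma interleave_double T (f g : nat -> T) i : interleave f g i.*2 = f i.
Proof. by rewrite /interleave odd_double half_double. Qed.

Lemma interleave_doubleS T (f g : nat -> T) i : interleave f g i.*2.+1 = g i.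
Proof. by rewrite /interleave /= odd_double /= uphalf_double. Qed.

Definition scons T (x : T) (f : nat -> T) (i : nat) : T :=
  if i is j.+1 then f j else x.

Section OrientedValues.
Variables (eps : R) (Gam : R * R -> Prop) (K : rcfType) (A : K -> Prop).
Variables (gp : R * R -> K * K) (dp : R -> K).
Hypothesis eps_gt1 : Rlt R1 eps.
Hypothesis Gam1 : Gam coneR.
Hypothesis A_gt0 : forall a, A a -> 0 < a.
Hypothesis dp_A : forall d, inDelta eps d -> A (dp d).
Hypothesis dpM :
  forall d d', inDelta eps d -> inDelta eps d' -> dp (Rmult d d') = dp d * dp d'.
Hypothesis dp_eps_gt1 : 1 < dp eps.
Hypothesis orientation : forall (Q : zpoly) (g : nat -> R * R) (d : nat -> R),
  (forall i, Gam (g i)) -> (forall i, inDelta eps (d i)) ->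
  (0 < evalK (fun i => dp (d i) * (gp (g i)).1) Q <->
   Rlt R0 (evalR (fun i => Rmult (d i) (g i).1) Q)).

Definition admissible (g : nat -> R * R) (d : nat -> R) :=
  (forall i, Gam (g i)) /\ (forall i, inDelta eps (d i)).

Definition reK (g : nat -> R * R) (d : nat -> R) (i : nat) : K := dp (d i) * (gp (g i)).1.
Definition reR (g : nat -> R * R) (d : nat -> R) (i : nat) : R := Rmult (d i) (g i).1.

Lemma admissible_const : admissible (fun=> coneR) (fun=> R1).
Proof. by split=> // _; exists Z0. Qed.

Lemma evalK_eq0 g d Q : admissible g d ->
  evalK (reK g d) Q = 0 <-> evalR (reR g d) Q = R0.
Proof.
move=> [gG dD]; have [posK posR] := (orientation Q gG dD, orientation (ZPNeg Q) gG dD).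
rewrite /= oppr_gt0 in posR; rewrite -/(reK g d) -/(reR g d) in posK posR *.
split=> Q0.
- rewrite Q0 ltxx in posK posR.
  case: (Rtotal_order (evalR (reR g d) Q) R0) => [|[//|]] QR.
  + by have := proj2 posR (Ropp_0_gt_lt_contravar _ QR).
  + by have := proj2 posK QR.
- rewrite Q0 in posK posR.
  by case: (ltgtP (evalK (reK g d) Q) 0) => // [/posR | /posK]; Lra.lra.
Qed.

Lemma inDelta_powerRZ z : inDelta eps (powerRZ eps z).
Proof. by exists z. Qed.

Lemma dp1 : dp R1 = 1.
Proof.
have D1 : inDelta eps R1 := inDelta_powerRZ Z0.
have := dpM D1 D1; rewrite Rmult_1_l => dp11.
by apply: (mulfI (lt0r_neq0 (A_gt0 (dp_A D1)))); rewrite mulr1.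
Qed.

Lemma gp1_re : (gp coneR).1 = 1.
Proof.
have := proj2 (evalK_eq0 (ZPAdd (ZPVar 0) (ZPNeg ZPOne)) admissible_const).
rewrite /= /reK /reR /= dp1 mul1r => /(_ ltac:(Lra.lra)) /eqP.
by rewrite subr_eq0 => /eqP.
Qed.

Definition dpow (z : Z) : K := dp (powerRZ eps z).

Lemma dpowD z1 z2 : dpow (Z.add z1 z2) = dpow z1 * dpow z2.
Proof.
rewrite /dpow powerRZ_add; last by Lra.lra.
by apply: dpM; apply: inDelta_powerRZ.
Qed.

Lemma dpow0 : dpow Z0 = 1.
Proof. exact: dp1. Qed.

Lemma dpow_gt0 z : 0 < dpow z.
Proof. exact/A_gt0/dp_A/inDelta_powerRZ. Qed.

Lemma dpowN z : dpow (Z.opp z) = (dpow z)^-1.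
Proof.
apply: (mulIf (lt0r_neq0 (dpow_gt0 z))).
by rewrite -dpowD Z.add_opp_diag_l mulVf ?(lt0r_neq0 (dpow_gt0 z)) // dpow0.
Qed.

Lemma dpowS z : dpow (Z.succ z) = dpow z * dp eps.
Proof. by rewrite -Z.add_1_r dpowD /dpow powerRZ_1. Qed.

Lemma dpow_nat_ge1 n : 1 <= dpow (Z.of_nat n).
Proof.
elim: n => [|n IH]; first by rewrite dpow0.
rewrite Nat2Z.inj_succ dpowS; apply: (le_trans IH).
by rewrite ler_peMr ?ltW ?dpow_gt0.
Qed.

Definition reS (x : K) : Prop :=
  exists g d, Gam g /\ inDelta eps d /\ x = dp d * (gp g).1.

Definition re_frac (x : K) := exists g d, admissible g d /\ zfrac (reK g d) x.

Lemma re_frac_common x y : re_frac x -> re_frac y ->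
  exists g d, admissible g d /\ zfrac (reK g d) x /\ zfrac (reK g d) y.
Proof.
move=> [g1 [d1 [[g1G d1D] x1]]] [g2 [d2 [[g2G d2D] y2]]].
exists (interleave g1 g2), (interleave d1 d2).
split; first by split=> i; rewrite /interleave; case: odd.
split; [apply: (zfrac_ren (f := double)) x1 | apply: (zfrac_ren (f := succn \o double)) y2].
all: move=> i.
- by rewrite /reK interleave_double interleave_double.
- by rewrite /reK interleave_doubleS interleave_doubleS.
Qed.

Lemma gen_field_re_frac x : gen_field reS x -> re_frac x.
Proof.
have const := admissible_const.
elim=> {x} [x [g [d [gG [dD ->]]]] | | | x y _ rx _ ry | x _ [g [d [adm rx]]]
           | x y _ rx _ ry | x _ [g [d [adm rx]]]].
- by exists (fun=> g), (fun=> d); split; [split | apply: (zfrac_var _ 0)].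
- by do 2 eexists; split; [exact: const | apply: zfrac0].
- by do 2 eexists; split; [exact: const | apply: zfrac1].
- have [g [d [adm [gx gy]]]] := re_frac_common rx ry.
  by exists g, d; split; last apply: zfracD.
- by exists g, d; split; last apply: zfracN.
- have [g [d [adm [gx gy]]]] := re_frac_common rx ry.
  by exists g, d; split; last apply: zfracM.
- by exists g, d; split; last apply: zfracV.
Qed.

Lemma transfer_sqr_lt g d P Q E : admissible g d -> inDelta eps E ->
  let pR := evalR (reR g d) P in let qR := evalR (reR g d) Q in
  let pK := evalK (reK g d) P in let qK := evalK (reK g d) Q in
  Rlt (Rmult pR pR) (Rmult (Rmult E E) (Rmult qR qR)) ->
  pK * pK < dp E * dp E * (qK * qK).
Proof.
move=> [gG dD] DE; rewrite /reR /reK.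
(* Variable 0 is given gamma = 1 and delta = E, so it takes the value E in R and E' in K. *)
have gG' : forall i, Gam (scons coneR g i) by case.
have dD' : forall i, inDelta eps (scons E d i) by case.
pose sh := zren succn.
have := proj2 (orientation (ZPAdd (ZPMul (ZPMul (ZPVar 0) (ZPVar 0)) (ZPMul (sh Q) (sh Q)))
  (ZPNeg (ZPMul (sh P) (sh P)))) gG' dD').
rewrite /= !evalK_ren !evalR_ren /= gp1_re mulr1 Rmult_1_r subr_gt0 => lt_pq lt_pqR.
by apply: lt_pq; Lra.lra.
Qed.

Lemma re_frac_bounded x : re_frac x ->
  exists N, forall M, (N <= M)%N -> bounded_by x (dpow (Z.of_nat M)).
Proof.
move=> [g [d [adm [P [Q [qK0 ->]]]]]].
have qR0 : evalR (reR g d) Q <> R0 by move/(evalK_eq0 Q adm)/eqP; apply/negP.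
have [N1 HN1] := eventually_sqr_lt (evalR (reR g d) P) eps_gt1 qR0.
have [pK0 | pK0] := eqVneq (evalK (reK g d) P) 0.
  by exists 0%N => M _; rewrite /bounded_by pK0 mul0r normr0 dpow_gt0 eqxx.
have pR0 : evalR (reR g d) P <> R0 by move/(evalK_eq0 P adm)/eqP; apply/negP.
have [N2 HN2] := eventually_sqr_lt (evalR (reR g d) Q) eps_gt1 pR0.
exists (maxn N1 N2) => M; rewrite geq_max => /andP[N1M N2M].
have DM := inDelta_powerRZ (Z.of_nat M); have DM0 := ltW (dpow_gt0 (Z.of_nat M)).
split=> [|_].
- apply: norm_divr_lt => //; apply: transfer_sqr_lt => //.
  by rewrite -pow_powerRZ; apply: HN1.
- apply: norm_divr_gt_inv => //; apply: transfer_sqr_lt => //.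
  by rewrite -pow_powerRZ; apply: HN2.
Qed.

Lemma rc_in_bounded k : rc_in reS k -> 0 < k ->
  exists T, k < dpow (Z.of_nat T) /\ k^-1 < dpow (Z.of_nat T).
Proof.
move=> [p [p0 [pS pk]]] k0; set n := (size p).-1.
have [N pN] := @eventually_forall_le (fun i M => bounded_by p`_i (dpow (Z.of_nat M))) n
  (fun i _ => re_frac_bounded (gen_field_re_frac (pS i))).
have [N' nN'] := re_frac_bounded (gen_field_re_frac (gen_field_nat reS n.+1)).
pose B := dpow (Z.of_nat (maxn N N')).
have pB i : bounded_by p`_i B.
  have [i_le_n | n_lt_i] := leqP i n; first by apply: pN => //; apply: leq_maxl.
  have szp : size p = n.+1 by rewrite prednK // size_poly_gt0.
  rewrite nth_default ?szp //.
  by rewrite /bounded_by normr0 dpow_gt0 eqxx.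
have [nB _] := nN' _ (leq_maxr N N').
have B1 : 1 <= B := dpow_nat_ge1 _.
have nB3 : 1 + n%:R * B ^+ 2 < B * B * B.
  rewrite ger0_norm // mulrS in nB.
  have B2 : 0 < B * B by rewrite mulr_gt0 // (lt_le_trans ltr01 B1).
  have : (1 + n%:R) * (B * B) < B * (B * B) by rewrite ltr_pM2r.
  have : 1 <= B * B by rewrite -[1]mulr1 ler_pM.
  by rewrite expr2 -mulrA; have := ler0n K n; nra.
exists (maxn N N' + maxn N N' + maxn N N')%N; rewrite !Nat2Z.inj_add !dpowD -/B.
have [kB kVB] := poly_root_bounds p0 k0 (lt_le_trans ltr01 B1) pB pk.
by split; apply: lt_trans nB3.
Qed.

Lemma rc_in_lambda k : rc_in reS k -> 0 < k ->
  exists2 d, inDelta eps d & is_lambda A (dp eps) k (dp d).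
Proof.
move=> rk k0; have [T [kT kVT]] := rc_in_bounded rk k0.
pose u j := dpow (Z.add (Z.opp (Z.of_nat T)) (Z.of_nat j)).
have uS j : u j.+1 = u j * dp eps by rewrite /u Nat2Z.inj_succ Z.add_succ_r dpowS.
have u0k : u 0%N <= k.
  rewrite /u Z.add_0_r dpowN -[k]invrK ltW // ltf_pV2 ?posrE ?invr_gt0 //.
  exact: dpow_gt0.
have kuT : k < u (T + T)%N.
  by rewrite /u (Nat2Z.inj_add T T) Z.add_assoc Z.add_opp_diag_l Z.add_0_l.
have [j [ujk kuj]] := exists_geometric_step uS u0k kuT.
exists (powerRZ eps (Z.add (Z.opp (Z.of_nat T)) (Z.of_nat j))); first exact: inDelta_powerRZ.
by split; first exact/dp_A/inDelta_powerRZ.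
Qed.

Lemma Delta_is_lambda d : inDelta eps d ->
  rc_in reS (dp d) /\ 0 < dp d /\ is_lambda A (dp eps) (dp d) (dp d).
Proof.
move=> Dd; have dp_gt0 := A_gt0 (dp_A Dd).
split; last by split=> //; split; [exact: dp_A | rewrite lexx ltr_pMr].
by apply/gen_field_rc_in/gf_base; exists coneR, d; rewrite gp1_re mulr1.
Qed.

End OrientedValues.

Theorem mainTheorem9 (eps : R) (Gam : R * R -> Prop)
  (Heps : Rlt R1 eps) (HGam : subgroup_S1R Gam) (HGamrk : finite_rank Gam)
  (K : rcfType) (G : K * K -> Prop) (A : K -> Prop)
  (gp : R * R -> K * K) (dp : R -> K)
  (HM : model_T eps Gam G A gp dp) :
  let S : K -> Prop :=
    fun x => exists g d, Gam g /\ inDelta eps d /\ x = (dp d * (gp g).1)%R in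
  forall a : K,
    (exists k : K, rc_in S k /\ (0 < k)%R /\ is_lambda A (dp eps) k a) <->
    (exists d, inDelta eps d /\ a = dp d).
Proof.
move=> S a.
case: HM => [_ [_ [HA [_ [He1 [Hemin [_ [_ [_ [Hdp [HdpM [Hor _]]]]]]]]]]]].
have [_ [Gam1 _]] := HGam.
split=> [[k [rk [k0 lam_a]]] | [d [Dd ->]]].
- have [d Dd lam_d] := rc_in_lambda Heps Gam1 HA.1 Hdp HdpM He1 Hor rk k0.
  by exists d; split; last exact: is_lambda_unique HA Hemin lam_a lam_d.
- by exists (dp d); apply: (Delta_is_lambda Gam1 HA.1 Hdp HdpM He1 Hor Dd).
Qed.
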